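(* Let $n\ge4$ be even. The set of words $\tau\in\mathcal{A}_n^{\mathbb{N}}$ that are not injective is $\nu_n$-null.
   Context: Let $\mathcal{A}_n=\{1,\dots,5n-6\}$, $\mathcal{A}_n^m$ words of length $m$, $\mathcal{A}_n^*$ all finite words, $\mathcal{A}_n^{\mathbb{N}}$ infinite words; for a word $\tau$, $\tau(m)$ is its prefix of length $m$. $\nu_n$ is the probability measure on $\mathcal{A}_n^{\mathbb{N}}$ (on the $\sigma$-algebra generated by cylinders) with $\nu_n(\{\tau:\tau(|w|)=w\})=(5n-6)^{-|w|}$ for all $w\in\mathcal{A}_n^*$. Define maps $\psi^1_{n,j},\psi^2_{n,j}:\mathbb{R}^2\to\mathbb{R}^2$, $j\in\mathcal{A}_n$, each of the form $x\mapsto\frac1nx+b$: for $j=1,\dots,4n-4$, $\psi^1_{n,j}=\psi^2_{n,j}$ map $[0,1]^2$ onto the $4n-4$ squares of the grid of $n^2$ closed squares of side $1/n$ in $[0,1]^2$ meeting $\partial[0,1]^2$; for $j=4n-3+i$, $i=0,\dots,\frac n2-2$, $\psi^1_{n,j}(x)=\psi^2_{n,j}(x)=\frac1nx+(\frac12+\frac in,\frac1n)$; for $j=4n+\frac n2-4+i$, $i=0,\dots,\frac n2-2$, $\psi^1_{n,j}(x)=\frac1nx+(\frac{i+1}n,\frac2n)$, $\psi^2_{n,j}(x)=\frac1nx+(\frac{i+1}n,\frac1n)$. A choice function is any $\eta:\mathcal{A}_n^*\to\{1,2\}$; $\phi^\eta_\varepsilon=\mathrm{id}$, $\phi^\eta_w=\psi^{\eta(\varepsilon)}_{n,i_1}\circ\psi^{\eta(i_1)}_{n,i_2}\circ\cdots\circ\psi^{\eta(i_1\cdots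 i_{m-1})}_{n,i_m}$ for $w=i_1\cdots i_m$; $K^\eta=\bigcap_{m\ge0}\bigcup_{w\in\mathcal{A}_n^m}\phi^\eta_w([0,1]^2)$; $\pi_\eta:\mathcal{A}_n^{\mathbb{N}}\to K^\eta$, $\pi_\eta(\tau)=\lim_{m\to\infty}\phi^\eta_{\tau(m)}(\mathbf{0})$. A word $\tau$ is injective if for every choice function $\eta$, $\pi_\eta^{-1}(\{\pi_\eta(\tau)\})=\{\tau\}$. *)

From HB Require Import structures.
From mathcomp Require Import all_boot all_order all_algebra.
From mathcomp Require Import all_classical all_reals all_analysis.
Set Implicit Arguments. Unset Strict Implicit. Unset Printing Implicit Defensive.
Import Order.TTheory GRing.Theory Num.Theory.
Import numFieldNormedType.Exports.
Local Open Scope classical_set_scope.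
Local Open Scope ring_scope.

(* Alphabet A_n = {1,...,5n-6}.  The letter j is represented by the ordinal
   i : 'I_(5n-6).-1.+1 with j = i+1 (for n >= 4, (5n-6).-1.+1 = 5n-6). *)
Definition alph (n : nat) : finType := 'I_(5 * n - 6).-1.+1.

Definition iword (n : nat) := nat -> alph n.
HB.instance Definition _ (n : nat) := isPointed.Build (alph n) ord0.

Definition prefix {n : nat} (tau : iword n) (m : nat) : seq (alph n) := mkseq tau m.

Definition cylinder {n : nat} (w : seq (alph n)) : set (iword n) :=
  [set tau | prefix tau (size w) = w].

Definition cylinders (n : nat) : set (set (iword n)) :=
  [set C | exists w : seq (alph n), C = cylinder w].

Definition wordspace (n : nat) := g_sigma_algebraType (@cylinders n).

Section Geometry.
Variable R : realType.

(* the (lower-left) grid cell (a,b) of the k-th boundary square, k = j-1,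
   k = 0..4n-5, enumerating the 4n-4 squares of the n x n grid meeting the
   boundary of [0,1]^2 (bottom row, top row, left column, right column) *)
Definition boundary_cell (n k : nat) : nat * nat :=
  (if k < n then (k, 0)
  else if k < 2 * n then (k - n, n.-1)
  else if k < 3 * n - 2 then (0, k - 2 * n + 1)
  else (n.-1, k - (3 * n - 2) + 1))%N.

(* translation vector b of psi^c_{n,j}; c = false stands for the superscript 1,
   c = true for the superscript 2 *)
Definition psi_offset (n : nat) (c : bool) (j : nat) : R * R :=
  if (j <= 4 * n - 4)%N then
    let ab := boundary_cell n (j.-1) in ((ab.1)%:R / n%:R, (ab.2)%:R / n%:R)
  else if (j <= 4 * n + n./2 - 5)%N then
    let i := (j - (4 * n - 3))%N in (2^-1 + i%:R / n%:R, 1 / n%:R)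
  else
    let i := (j - (4 * n + n./2 - 4))%N in
    ((i.+1)%N%:R / n%:R, (if c then 1 else 2)%:R / n%:R).

Definition psi (n : nat) (c : bool) (j : nat) (x : R * R) : R * R :=
  (x.1 / n%:R + (psi_offset n c j).1, x.2 / n%:R + (psi_offset n c j).2).

(* choice functions eta : A_n^* -> {1,2}, encoded with bool (false = 1, true = 2) *)
Definition choice_fun (n : nat) := seq (alph n) -> bool.

(* phi^eta_w = psi^{eta(eps)}_{i1} o psi^{eta(i1)}_{i2} o ... o psi^{eta(i1..i_{m-1})}_{im} *)
Fixpoint phi {n : nat} (eta : choice_fun n) (w : seq (alph n)) (x : R * R) : R * R :=
  match w with
  | [::] => x
  | i :: w' => psi n (eta [::]) (i.+1)%N (phi (fun u => eta (i :: u)) w' x)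
  end.

(* pi_eta(tau) = lim_m phi^eta_{tau(m)}(0); the limit in R^2 is taken
   coordinatewise (the sequence converges, so this is the usual limit) *)
Definition coding {n : nat} (eta : choice_fun n) (tau : iword n) : R * R :=
  (limn (fun m => (phi eta (prefix tau m) (0, 0)).1),
   limn (fun m => (phi eta (prefix tau m) (0, 0)).2)).

Definition injective_word {n : nat} (tau : iword n) : Prop :=
  forall eta : choice_fun n,
    (@coding n eta) @^-1` [set coding eta tau] = [set tau].

End Geometry.

From Pilot Require Import Defs.
From HB Require Import structures.
From mathcomp Require Import all_boot all_order all_algebra.
From mathcomp Require Import all_classical all_reals all_analysis.
From mathcomp Require Import zify ring lra.
Set Implicit Arguments. Unset Strict Implicit. Unset Printing Implicit Defensive.

(* Each psi^c_{n,j} is x |-> (x + cell) / n for a cell of the n x n grid: the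
   4n-4 boundary letters use the cells meeting the boundary of [0,1]^2, the other
   letters use interior cells, and for a fixed superscript distinct letters use
   distinct cells.  Hence a coding lying on the boundary of [0,1]^2 only uses
   boundary letters.  If two words have the same coding, then at the first
   position where they differ the tails are coded by points mapped onto distinct
   cells with a common image, so these points lie on the boundary and all later
   letters are boundary letters.  Thus a non-injective word ends with boundary
   letters only, and such words are null: having boundary letters at the m
   positions k, ..., k+m-1 has probability ((4n-4)/(5n-6))^m. *)

Import Order.TTheory GRing.Theory Num.Theory.
Import numFieldNormedType.Exports.
Local Open Scope classical_set_scope.
Local Open Scope ring_scope.

(* psi n c j maps [0,1]^2 onto the grid square with lower-left corner
   grid_cell n c j / n (lemma psiE); the offset 1/2 is the column n/2. *)
Definition grid_cell (n : nat) (c : bool) (j : nat) : nat * nat :=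
  (if j <= 4 * n - 4 then boundary_cell n j.-1
  else if j <= 4 * n + n./2 - 5 then (n./2 + (j - (4 * n - 3)), 1)
  else ((j - (4 * n + n./2 - 4)).+1, if c then 1 else 2))%N.

Definition boundary_letter {n : nat} (a : alph n) := (a < 4 * n - 4)%N.

Section GridCells.
Context {n : nat}.
Hypotheses (n_gt0 : (0 < n)%N) (n_even : ~~ odd n).

Let half_double : exists h, n = (h + h)%N /\ n./2 = h.
Proof. by exists n./2; rewrite addnn even_halfK // doubleK. Qed.

Lemma letter_lt (a : alph n) : (a < 5 * n - 6)%N.
Proof. have := ltn_ord a; rewrite /=; lia. Qed.

Lemma grid_cell_lt c (a : alph n) :
  ((grid_cell n c a.+1).1 < n /\ (grid_cell n c a.+1).2 < n)%N.
Proof.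
have := letter_lt a; have [h [nh hh]] := half_double.
rewrite /grid_cell /boundary_cell hh; subst n.
by case: c; repeat case: ifP => ?; rewrite /=; lia.
Qed.

Lemma grid_cell_inner c (a : alph n) : ~~ boundary_letter a ->
  (0 < (grid_cell n c a.+1).1 /\ (grid_cell n c a.+1).1.+1 < n /\
   0 < (grid_cell n c a.+1).2 /\ (grid_cell n c a.+1).2.+1 < n)%N.
Proof.
rewrite /boundary_letter -leqNgt.
have := letter_lt a; have [h [nh hh]] := half_double.
rewrite /grid_cell /boundary_cell hh; subst n.
by case: c; repeat case: ifP => ?; rewrite /=; lia.
Qed.

Lemma grid_cell_inj c : injective (fun a : alph n => grid_cell n c a.+1).
Proof.
move=> a b /= E; apply/val_inj/succn_inj.
have := letter_lt a; have := letter_lt b.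
have E1 := f_equal fst E; have E2 := f_equal snd E; move: E1 E2 {E}.
have [h [nh hh]] := half_double.
rewrite /grid_cell /boundary_cell hh; subst n.
by case: c; repeat case: ifP => ?; rewrite /=; lia.
Qed.

End GridCells.

Section Rescale.
Context {R : realFieldType}.
Implicit Types (x y : R) (n p q : nat).

Definition rescale n p x : R := (x + p%:R) / n%:R.

Definition endpoint x := (x == 0) || (x == 1).

Lemma rescaleK n p x : (0 < n)%N -> rescale n p x * n%:R = x + p%:R.
Proof. by move=> n_gt0; rewrite mulfVK // pnatr_eq0 -lt0n. Qed.

Lemma rescale_inj n p : (0 < n)%N -> injective (rescale n p).
Proof.
by move=> n_gt0 x y /(congr1 (fun z => z * n%:R)); rewrite !rescaleK // => /addIr.
Qed.

Lemma rescale_itv n p x : (p < n)%N -> 0 <= x <= 1 -> 0 <= rescale n p x <= 1.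
Proof.
move=> pn /andP[x0 x1]; have n_gt0 : (0 < n)%N by lia.
have E := rescaleK p x n_gt0.
have pn' : p%:R + 1 <= n%:R :> R by rewrite natr1 ler_nat.
have n0 : 0 < n%:R :> R by rewrite ltr0n.
have p0 := ler0n R p.
by apply/andP; split; nra.
Qed.

Lemma endpoint_rescale n p x : (p < n)%N -> 0 <= x <= 1 ->
  endpoint (rescale n p x) -> endpoint x.
Proof.
move=> pn /andP[x0 x1]; have n_gt0 : (0 < n)%N by lia.
have E := rescaleK p x n_gt0.
have pn' : p%:R + 1 <= n%:R :> R by rewrite natr1 ler_nat.
have p0 := ler0n R p.
rewrite /endpoint => /orP[] /eqP r01; rewrite r01 in E; apply/orP.
- by left; apply/eqP; lra.
- by right; apply/eqP; lra.
Qed.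

Lemma rescale_inner n p x : (0 < p)%N -> (p.+1 < n)%N -> 0 <= x <= 1 ->
  ~~ endpoint (rescale n p x).
Proof.
move=> p_gt0 pn /andP[x0 x1]; have n_gt0 : (0 < n)%N by lia.
have E := rescaleK p x n_gt0.
have pn' : p%:R + 2 <= n%:R :> R by rewrite -natrD ler_nat addn2.
have p1 : 1 <= p%:R :> R by rewrite ler1n.
by rewrite /endpoint; apply/norP; split; apply/eqP => r01; rewrite r01 in E; lra.
Qed.

Lemma rescale_collision n p q x y : (0 < n)%N -> p != q ->
  0 <= x <= 1 -> 0 <= y <= 1 -> rescale n p x = rescale n q y -> endpoint x.
Proof.
move=> n_gt0 pq /andP[x0 x1] /andP[y0 y1] /(congr1 (fun z => z * n%:R)).
rewrite !rescaleK // /endpoint => E.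
have [pq'|qp'] : (p.+1 <= q)%N \/ (q.+1 <= p)%N by lia.
- have : p%:R + 1 <= q%:R :> R by rewrite natr1 ler_nat.
  by move=> ?; apply/orP; right; apply/eqP; lra.
- have : q%:R + 1 <= p%:R :> R by rewrite natr1 ler_nat.
  by move=> ?; apply/orP; left; apply/eqP; lra.
Qed.

End Rescale.

Section Coding.
Variables (R : realType) (n : nat).
Hypotheses (n_gt0 : (0 < n)%N) (n_even : ~~ odd n).

Definition in_unit_square (z : R * R) := 0 <= z.1 <= 1 /\ 0 <= z.2 <= 1.

Definition on_square_boundary (z : R * R) := endpoint z.1 || endpoint z.2.

Lemma psiE c j (z : R * R) :
  psi n c j z = (rescale n (grid_cell n c j).1 z.1, rescale n (grid_cell n c j).2 z.2).
Proof.
have nR : n%:R != 0 :> R by rewrite pnatr_eq0 -lt0n.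
rewrite /psi /psi_offset /grid_cell /rescale.
case: ifP => _; first by rewrite /= !mulrDl.
case: ifP => _ /=; last by rewrite !mulrDl.
rewrite !mulrDl natrD mulrDl; congr (_ + (_ + _), _).
have {2}-> : n = (n./2 + n./2)%N by rewrite addnn even_halfK.
have h0 : n./2%:R != 0 :> R by rewrite pnatr_eq0 -lt0n half_gt0; lia.
rewrite natrD; field.
by rewrite -natrD pnatr_eq0 addnn double_eq0 -(pnatr_eq0 R).
Qed.

Lemma psi_in_unit_square c (a : alph n) z :
  in_unit_square z -> in_unit_square (psi n c a.+1 z).
Proof.
have [lt1 lt2] := grid_cell_lt n_gt0 n_even c a.
by rewrite psiE => -[z1 z2]; split; apply: rescale_itv.
Qed.

Lemma psi_on_square_boundary c (a : alph n) z : in_unit_square z ->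
  on_square_boundary (psi n c a.+1 z) -> boundary_letter a /\ on_square_boundary z.
Proof.
have [lt1 lt2] := grid_cell_lt n_gt0 n_even c a.
rewrite psiE /on_square_boundary /= => -[z1 z2] onb; split.
  apply: contraT => /(grid_cell_inner n_gt0 n_even c) [p1 [q1 [p2 q2]]].
  by move: onb; rewrite (negPf (rescale_inner p1 q1 z1)) (negPf (rescale_inner p2 q2 z2)).
by case/orP: onb => /endpoint_rescale ->; rewrite ?orbT.
Qed.

Lemma psi_inj c j : injective (@psi R n c j).
Proof.
move=> y y'; rewrite !psiE => -[/rescale_inj e1 /rescale_inj e2].
by case: y y' e1 e2 => [? ?] [? ?] /= -> // ->.
Qed.

Lemma psi_collision c (a a' : alph n) y y' : a != a' ->
  in_unit_square y -> in_unit_square y' ->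
  psi n c a.+1 y = psi n c a'.+1 y' -> on_square_boundary y.
Proof.
move=> aa' [y1 y2] [y1' y2']; rewrite !psiE => -[e1 e2].
have [c1|c1] := eqVneq (grid_cell n c a.+1).1 (grid_cell n c a'.+1).1.
- have c2 : (grid_cell n c a.+1).2 != (grid_cell n c a'.+1).2.
    apply: contra aa' => /eqP c2; apply/eqP/(grid_cell_inj n_gt0 n_even (c := c)) => /=.
    by rewrite [LHS]surjective_pairing c1 c2 -surjective_pairing.
  by rewrite /on_square_boundary (rescale_collision n_gt0 c2 y2 y2' e2) orbT.
- by rewrite /on_square_boundary (rescale_collision n_gt0 c1 y1 y1' e1).
Qed.

Definition tail_word (tau : iword n) : iword n := fun k => tau k.+1.

Definition choice_after (eta : choice_fun n) (a : alph n) : choice_fun n :=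
  fun u => eta (a :: u).

Lemma prefixS (tau : iword n) m :
  Defs.prefix tau m.+1 = tau 0%N :: Defs.prefix (tail_word tau) m.
Proof. by rewrite /Defs.prefix /mkseq /= (iotaDl 1 0) -map_comp. Qed.

Definition coding_approx (eta : choice_fun n) (tau : iword n) m : R * R :=
  phi eta (Defs.prefix tau m) (0, 0).

Lemma coding_approxS eta tau m : coding_approx eta tau m.+1 =
  psi n (eta [::]) (tau 0%N).+1
    (coding_approx (choice_after eta (tau 0%N)) (tail_word tau) m).
Proof. by rewrite /coding_approx prefixS. Qed.

Lemma coding_approx_in_unit_square m eta tau : in_unit_square (coding_approx eta tau m).
Proof.
elim: m eta tau => [|m IH] eta tau; first by rewrite /in_unit_square /= lexx ler01.
by rewrite coding_approxS; apply: psi_in_unit_square.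
Qed.

Lemma coding_approx_nondecreasing m eta tau :
  (coding_approx eta tau m).1 <= (coding_approx eta tau m.+1).1 /\
  (coding_approx eta tau m).2 <= (coding_approx eta tau m.+1).2.
Proof.
elim: m eta tau => [|m IH] eta tau.
  by have [/andP[? _] /andP[? _]] := coding_approx_in_unit_square 1 eta tau.
rewrite [coding_approx _ _ m.+1]coding_approxS [coding_approx _ _ m.+2]coding_approxS !psiE.
have [le1 le2] := IH (choice_after eta (tau 0%N)) (tail_word tau).
by split; rewrite ler_pM2r ?invr_gt0 ?ltr0n // lerD2r.
Qed.

Lemma coding_approx_cvg eta tau :
  cvgn (fun m => (coding_approx eta tau m).1) /\
  cvgn (fun m => (coding_approx eta tau m).2).
Proof.
split; apply: nondecreasing_is_cvgn.
- by apply/nondecreasing_seqP => m; have [] := coding_approx_nondecreasing m eta tau.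
- exists 1 => _ [m _ <-]; by have [/andP[_ ->] _] := coding_approx_in_unit_square m eta tau.
- by apply/nondecreasing_seqP => m; have [] := coding_approx_nondecreasing m eta tau.
- exists 1 => _ [m _ <-]; by have [_ /andP[_ ->]] := coding_approx_in_unit_square m eta tau.
Qed.

Lemma coding_in_unit_square (eta : choice_fun n) (tau : iword n) :
  in_unit_square (coding R eta tau).
Proof.
have [cvg1 cvg2] := coding_approx_cvg eta tau.
have sq m := coding_approx_in_unit_square m eta tau.
split; apply/andP; split.
- by apply: limr_ge cvg1 _; apply: nearW => m; have [/andP[]] := sq m.
- by apply: limr_le cvg1 _; apply: nearW => m; have [/andP[]] := sq m.
- by apply: limr_ge cvg2 _; apply: nearW => m; have [_ /andP[]] := sq m.
- by apply: limr_le cvg2 _; apply: nearW => m; have [_ /andP[]] := sq m.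
Qed.

Lemma limn_rescale p (u v : R^nat) : cvgn u ->
  (forall m, v m.+1 = rescale n p (u m)) -> limn v = rescale n p (limn u).
Proof.
move=> u_cvg vE; apply: cvg_lim => //; rewrite -cvg_shiftS.
have -> : [sequence v m.+1]_m = (fun m => rescale n p (u m)) by apply: funext.
by apply: cvgMl; apply: cvgD => //; apply: cvg_cst.
Qed.

Lemma coding_cons (eta : choice_fun n) (tau : iword n) : coding R eta tau =
  psi n (eta [::]) (tau 0%N).+1 (coding R (choice_after eta (tau 0%N)) (tail_word tau)).
Proof.
have [cvg1 cvg2] := coding_approx_cvg (choice_after eta (tau 0%N)) (tail_word tau).
by rewrite psiE; congr pair; apply: limn_rescale => // m;
  rewrite -[phi _ _ _]/(coding_approx _ _ _) coding_approxS psiE.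
Qed.

Lemma boundary_coding_letters (eta : choice_fun n) (tau : iword n) :
  on_square_boundary (coding R eta tau) -> forall j, boundary_letter (tau j).
Proof.
move=> onb j; elim: j eta tau onb => [|j IH] eta tau;
  rewrite coding_cons => /psi_on_square_boundary -[] //; try exact: coding_in_unit_square.
by move=> _ /IH.
Qed.

Lemma coding_collision_head (eta : choice_fun n) (tau tau' : iword n) :
  tau 0%N != tau' 0%N -> coding R eta tau = coding R eta tau' ->
  forall j, (0 < j)%N -> boundary_letter (tau j).
Proof.
rewrite (coding_cons eta tau) (coding_cons eta tau') => neq same [//|j] _.
have onb := psi_collision neq (coding_in_unit_square _ _) (coding_in_unit_square _ _) same.
exact: boundary_coding_letters onb j.
Qed.

Lemma coding_collision m (eta : choice_fun n) (tau tau' : iword n) :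
  tau m != tau' m -> coding R eta tau = coding R eta tau' ->
  forall j, (m < j)%N -> boundary_letter (tau j).
Proof.
elim: m eta tau tau' => [|m IH] eta tau tau' neq same.
  exact: coding_collision_head neq same.
have [eq0|neq0] := eqVneq (tau 0%N) (tau' 0%N); last first.
  by move=> j mj; apply: (coding_collision_head neq0 same); lia.
move: same; rewrite (coding_cons eta tau) (coding_cons eta tau') eq0.
by move=> /psi_inj /(IH _ (tail_word tau) (tail_word tau') neq) tail_bd [//|j] /tail_bd.
Qed.

Lemma not_injective_word_eventually_boundary (tau : iword n) :
  ~ injective_word R tau -> exists k, forall j, (k <= j)%N -> boundary_letter (tau j).
Proof.
move=> /existsNP [eta]; rewrite eqEsubset not_andP => -[|[]]; last by move=> _ ->.
move=> /existsNP [tau' /not_implyP [/= same neq]].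
have /existsNP [m /negP neq_m] : ~ (forall m, tau m == tau' m).
  by move=> all_eq; apply: neq; apply/funext => m; apply/esym/eqP.
exists m.+1 => j; apply: coding_collision neq_m (esym same) j.
Qed.

End Coding.

Lemma ge0_le_geometric_eq0 (R : realType) (q : R) (x : \bar R) : `|q| < 1 ->
  (0 <= x)%E -> (forall m, x <= (q ^+ m)%:E)%E -> x = 0%E.
Proof.
move=> q1 x0 le_x; apply/le_anti; rewrite x0 andbT.
have q_cvg := cvg_expr q1.
move: x0 le_x; case: x => [r _|_ /(_ 0%N)//|//] le_r.
rewrite lee_fin -(cvg_lim _ q_cvg) //; apply: limr_ge (cvgP _ q_cvg) _.
by apply: nearW => m; rewrite -lee_fin.
Qed.

Lemma negligible_geometric {d} {T : measurableType d} {R : realType}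
    (mu : {measure set T -> \bar R}) (A : set T) (C : nat -> set T) (q : R) :
  `|q| < 1 -> (forall m, measurable (C m)) -> (forall m, A `<=` C m) ->
  (forall m, mu (C m) <= (q ^+ m)%:E)%E -> mu.-negligible A.
Proof.
move=> q1 mC AC muC; exists (\bigcap_m C m); split.
- exact: bigcapT_measurable.
- apply: ge0_le_geometric_eq0 q1 (measure_ge0 _ _) _ => m.
  apply: le_trans (muC m); apply: le_measure; rewrite ?inE //.
    exact: bigcapT_measurable.
  exact: bigcap_inf.
- by move=> tau Atau m _; apply: AC.
Qed.

Section UniformWords.
Variables (R : realType) (n : nat).
Variable nu : probability (wordspace n) R.
Hypothesis nu_cyl : forall w : seq (alph n),
  nu (cylinder w) = (((5 * n - 6)%:R : R) ^- size w)%:E.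

(* Prefixes as finite functions, so that sets of prefixes are counted by card_family. *)
Definition window L (tau : iword n) : {ffun 'I_L -> alph n} := [ffun i : 'I_L => tau i].

Lemma window_cylinder L (f : {ffun 'I_L -> alph n}) :
  [set tau | window L tau = f] = cylinder (codom f).
Proof.
have prefixE (tau : iword n) : Defs.prefix tau L = map (tau \o val) (enum 'I_L).
  by rewrite map_comp val_enum_ord.
rewrite /cylinder size_codom card_ord codomE.
apply/seteqP; split => tau /=; rewrite prefixE.
  by move=> <-; apply: eq_map => i; rewrite /= ffunE.
move=> /eq_in_map tau_f; apply/ffunP => i; rewrite ffunE.
by apply: tau_f; rewrite mem_enum.
Qed.

Lemma measurable_window L (f : {ffun 'I_L -> alph n}) :
  measurable ([set tau | window L tau = f] : set (wordspace n)).
Proof. by rewrite window_cylinder; apply: sub_gen_smallest; exists (codom f). Qed.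

Lemma window_in_bigcup L (S : pred {ffun 'I_L -> alph n}) :
  [set tau | window L tau \in S] =
  \bigcup_(f in [set` enum S]) [set tau | window L tau = f].
Proof.
apply/seteqP; split => tau /=.
  by move=> Stau; exists (window L tau); rewrite //= mem_enum.
by case=> f /=; rewrite mem_enum => Sf ->.
Qed.

Lemma measurable_window_in L (S : pred {ffun 'I_L -> alph n}) :
  measurable ([set tau | window L tau \in S] : set (wordspace n)).
Proof.
rewrite window_in_bigcup; apply: fin_bigcup_measurable => // f _.
exact: measurable_window.
Qed.

Lemma measure_window_in L (S : pred {ffun 'I_L -> alph n}) :
  nu [set tau | window L tau \in S] = (#|S|%:R * (5 * n - 6)%:R ^- L)%:E.
Proof.
rewrite window_in_bigcup measure_fin_bigcup; [|exact: finite_seq|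
  by move=> f g _ _ [tau [/= <- <-]]|by move=> f _; exact: measurable_window].
rewrite -fsbig_seq ?enum_uniq // big_enum /=.
under eq_bigr do rewrite window_cylinder nu_cyl size_codom card_ord.
by rewrite sumEFin sumr_const mulr_natl.
Qed.

Hypothesis n_ge2 : (2 <= n)%N.
Variable B : pred (alph n).

Lemma card_alph : #|alph n| = (5 * n - 6)%N.
Proof. by rewrite card_ord; lia. Qed.

Definition block_family k m : simpl_pred {ffun 'I_(k + m) -> alph n} :=
  family (fun i : 'I_(k + m) => [pred a | (k <= i)%N ==> B a]).

Lemma card_block_family k m : #|block_family k m| = (#|alph n| ^ k * #|B| ^ m)%N.
Proof.
rewrite card_family foldrE big_map big_enum big_split_ord /=.
rewrite -[in RHS](card_ord k) -[in RHS](card_ord m) -!prod_nat_const.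
congr (_ * _)%N; apply: eq_big => [i|i _]; rewrite ?inE //; apply: eq_card => a.
  by rewrite unfold_in /= leqNgt ltn_ord.
by rewrite unfold_in /= leq_addr.
Qed.

Definition block_set k m : set (wordspace n) :=
  [set tau | forall j, (k <= j < k + m)%N -> B (tau j)].

Lemma block_set_window k m :
  block_set k m = [set tau | window (k + m) tau \in block_family k m].
Proof.
apply/seteqP; split => tau /=.
  move=> Btau; apply/familyP => i; rewrite unfold_in /= ffunE.
  by apply/implyP => ki; apply: Btau; rewrite ki ltn_ord.
move=> /familyP Btau j /andP[kj jkm]; have := Btau (Ordinal jkm).
by rewrite unfold_in /= ffunE kj.
Qed.

Lemma measurable_block_set k m : measurable (block_set k m).
Proof. by rewrite block_set_window; apply: measurable_window_in. Qed.

Lemma measure_block_set k m :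
  nu (block_set k m) = ((#|B|%:R / (5 * n - 6)%:R) ^+ m)%:E.
Proof.
rewrite block_set_window measure_window_in; congr EFin.
have N0 : (5 * n - 6)%:R != 0 :> R by rewrite pnatr_eq0; lia.
rewrite card_block_family card_alph natrM !natrX exprD expr_div_n invfM.
by field; rewrite ?expf_neq0.
Qed.

Lemma negligible_eventually_in (a0 : alph n) : ~~ B a0 ->
  forall k, nu.-negligible [set tau : wordspace n | forall j, (k <= j)%N -> B (tau j)].
Proof.
move=> Ba0 k; have B_lt : (#|B| < 5 * n - 6)%N.
  rewrite -card_alph -(cardC B) -addn1 leq_add2l; apply/card_gt0P.
  by exists a0; rewrite inE.
apply: (negligible_geometric (C := block_set k) (q := #|B|%:R / (5 * n - 6)%:R)).
- rewrite ger0_norm ?divr_ge0 // ltr_pdivrMr ?mul1r ?ltr_nat //; by rewrite ltr0n; lia.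
- exact: measurable_block_set.
- by move=> m tau Btau j /andP[kj _]; apply: Btau.
- by move=> m; rewrite -(measure_block_set k).
Qed.

End UniformWords.

Theorem lemma5p3 (R : realType) (n : nat) (n_ge4 : (4 <= n)%N) (n_even : ~~ odd n)
  (nu : probability (wordspace n) R)
  (nu_cyl : forall w : seq (alph n),
     nu (cylinder w) = (((5 * n - 6)%:R : R) ^- size w)%:E) :
  exists N : set (wordspace n),
    measurable N /\ nu N = 0%E /\
    [set tau : wordspace n | ~ @injective_word R n tau] `<=` N.
Proof.
have n_gt0 : (0 < n)%N by lia.
have inner_letter : ~~ boundary_letter (ord_max : alph n).
  by rewrite /boundary_letter /=; lia.
have [N [mN nuN N_covers]] : nu.-negligible
    (\bigcup_k [set tau : wordspace n | forall j, (k <= j)%N -> boundary_letter (tau j)]).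
  apply: negligible_bigcup => k.
  by apply: (negligible_eventually_in nu_cyl _ inner_letter); lia.
exists N; split => //; split => // tau.
move=> /(not_injective_word_eventually_boundary n_gt0 n_even) [k bd].
by apply: N_covers; exists k.
Qed.
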